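(* Let $F$ be the elementary cellular automaton with rule number 132. Then $D(\textsc{Pred}_{F,n})=O(\log n)$.
   Context: An elementary cellular automaton (ECA) with rule number $N\in\{0,\dots,255\}$ is the map $F:\{0,1\}^{\mathbb Z}\to\{0,1\}^{\mathbb Z}$ given by $F(x)_i=f(x_{i-1},x_i,x_{i+1})$. Here the local rule $f:\{0,1\}^3\to\{0,1\}$ is determined by $N=\sum_{a,b,c\in\{0,1\}}2^{4a+2b+c}f(a,b,c)$. On a finite word of length $m\ge 3$, $F$ produces the word of length $m-2$ obtained by applying $f$ at every position whose full neighbourhood lies in the word. For $n\ge1$, $\textsc{Pred}_{F,n}:\{0,1\}^{2n+1}\to\{0,1\}$ maps a word $x=x_{-n}\cdots x_n$ to the single letter of $F^n(x)$, i.e. the state of the central cell after $n$ steps. For a function $g:X\times Y\to Z$, $D(g)$ is the minimal depth of a deterministic two-party protocol computing $g$. In such a protocol, Alice knows $x$ and Bob knows $y$. The protocol is a binary tree: each internal node is labelled by a function of Alice's input only or of Bob's input only, with values in $\{\text{left},\text{right}\}$, and each leaf is labelled by an output value. For $g:\{0,1\}^m\to Z$, set $D(g)=\max_{0\le i<m}D(g_i)$, where $g_i:\{0,1\}^i\times\{0,1\}^{m-i}\to Z$ is $g_i(x,y)=g(xy)$. *)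

From mathcomp Require Import all_boot.
Set Implicit Arguments. Unset Strict Implicit. Unset Printing Implicit Defensive.

Definition eca_local (N : nat) (a b c : bool) : bool :=
  odd (N %/ 2 ^ (4 * a + 2 * b + c)).

Definition eca_step (N : nat) (w : seq bool) : seq bool :=
  [seq eca_local N (nth false w j) (nth false w j.+1) (nth false w j.+2)
  | j <- iota 0 (size w - 2)].

(* Pred_{F,n}(x) : the single letter of F^n(x) (x of length 2n+1). *)
Definition Pred (N n : nat) (x : seq bool) : bool :=
  head false (iter n (eca_step N) x).

Inductive protocol (X Y Z : Type) : Type :=
  | Leaf of Z
  | NodeA of (X -> bool) & protocol X Y Z & protocol X Y Z
      (* Alice speaks; false = left, true = right *)
  | NodeB of (Y -> bool) & protocol X Y Z & protocol X Y Z.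

Arguments Leaf {X Y Z}.
Arguments NodeA {X Y Z}.
Arguments NodeB {X Y Z}.

Fixpoint prot_eval X Y Z (p : protocol X Y Z) (x : X) (y : Y) : Z :=
  match p with
  | Leaf z => z
  | NodeA f l r => if f x then prot_eval r x y else prot_eval l x y
  | NodeB g l r => if g y then prot_eval r x y else prot_eval l x y
  end.

Fixpoint prot_depth X Y Z (p : protocol X Y Z) : nat :=
  match p with
  | Leaf _ => 0
  | NodeA _ l r => (maxn (prot_depth l) (prot_depth r)).+1
  | NodeB _ l r => (maxn (prot_depth l) (prot_depth r)).+1
  end.

(* "D(g) <= k" for g : X * Y -> Z : some protocol of depth <= k computes g.
   (D(g) is the minimum such k, so D(g) <= k is exactly this.) *)
Definition D2_le X Y Z (g : X -> Y -> Z) (k : nat) : Prop :=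
  exists p : protocol X Y Z,
    prot_depth p <= k /\ forall x y, prot_eval p x y = g x y.

(* "D(g) <= k" for g : {0,1}^m -> Z, i.e. max_{0<=i<m} D(g_i) <= k,
   where g_i(x,y) = g(xy), x in {0,1}^i, y in {0,1}^(m-i). *)
Definition Dword_le Z (m : nat) (g : seq bool -> Z) (k : nat) : Prop :=
  forall i, i < m ->
    D2_le (fun (x : i.-tuple bool) (y : (m - i).-tuple bool) =>
             g (tval x ++ tval y)) k.

From mathcomp Require Import all_boot zify.

(* Rule 132 keeps a cell alive iff it is alive and its two neighbours agree.
   Folding the word around its centre turns the automaton into a rule on pairs
   (w_{n-d}, w_{n+d}), and under it the centre survives n steps iff it is 1 and
   the runs of 1s immediately to its left and to its right have equal length.
   If the cut lies left of the centre, Alice's part therefore matters only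
   through the length of its trailing run of 1s, a number at most n, which she
   sends in trunc_log 2 n + 1 bits; Bob then announces the answer.  A cut right
   of the centre is symmetric, with Bob sending his leading run. *)

Set Implicit Arguments.
Unset Strict Implicit.
Unset Printing Implicit Defensive.

Section Folding.

Variable N : nat.

Lemma size_eca_step w : size (eca_step N w) = size w - 2.
Proof. by rewrite /eca_step size_map size_iota. Qed.

Lemma nth_eca_step w j : j < size w - 2 ->
  nth false (eca_step N w) j =
  eca_local N (nth false w j) (nth false w j.+1) (nth false w j.+2).
Proof. by move=> lt_j; rewrite /eca_step (nth_map 0) ?size_iota // nth_iota. Qed.

Definition left_arm n (w : seq bool) := rev (take n w).
Definition right_arm n (w : seq bool) := drop n.+1 w.
Definition folded n w := zip (left_arm n w) (right_arm n w).

Lemma size_arms n w : size w = (2 * n).+1 ->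
  size (left_arm n w) = n /\ size (right_arm n w) = n.
Proof. by move=> sz_w; rewrite size_rev size_drop size_takel; lia. Qed.

Lemma size_folded n w : size w = (2 * n).+1 -> size (folded n w) = n.
Proof. by move=> /size_arms[szl szr]; rewrite size_zip szl szr minnn. Qed.

Lemma nth_folded n w j : size w = (2 * n).+1 -> j < n ->
  nth (false, false) (folded n w) j = (nth false w (n - j.+1), nth false w (n + j.+1)).
Proof.
move=> sz_w lt_jn; have [szl szr] := size_arms sz_w.
have le_nw : n <= size w by lia.
rewrite nth_zip ?szl ?szr // nth_rev ?szl // size_takel //.
by rewrite nth_take ?nth_drop ?addSnnS //; lia.
Qed.

(* On the folded word the left arm is read outwards, so the left coordinate
   sees its neighbourhood mirrored. *)
Definition pair_local (p q r : bool * bool) :=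
  (eca_local N r.1 q.1 p.1, eca_local N p.2 q.2 r.2).

Fixpoint pair_step (l : seq (bool * bool)) : seq (bool * bool) :=
  if l is p :: ((q :: r :: _) as l') then pair_local p q r :: pair_step l' else [::].

Lemma size_pair_step l : size (pair_step l) = size l - 2.
Proof.
elim: l => [|p l IH] //=; case: l IH => [|q [|r l]] //= IH.
by rewrite IH /= !subn2.
Qed.

Lemma nth_pair_step l j : j < size l - 2 ->
  nth (false, false) (pair_step l) j =
  pair_local (nth (false, false) l j) (nth (false, false) l j.+1)
             (nth (false, false) l j.+2).
Proof.
elim: l j => [|p l IH] j //=; case: l IH => [|q [|r l]] IH //=; try lia.
by case: j => [|j] //= lt_j; rewrite IH //=; lia.
Qed.

Lemma folded_eca_step m w : size w = (2 * m.+1).+1 ->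
  folded m (eca_step N w) =
  pair_step ((nth false w m.+1, nth false w m.+1) :: folded m.+1 w).
Proof.
move=> sz_w; have sz_w' : size (eca_step N w) = (2 * m).+1.
  by rewrite size_eca_step sz_w; lia.
have nth_ext e : e <= m.+1 ->
    nth (false, false) ((nth false w m.+1, nth false w m.+1) :: folded m.+1 w) e =
    (nth false w (m.+1 - e), nth false w (m.+1 + e)).
  by case: e => [|e] le_e /=; rewrite ?subn0 ?addn0 ?nth_folded.
apply: (@eq_from_nth _ (false, false)).
  by rewrite size_pair_step /= !size_folded //; lia.
rewrite size_folded // => j lt_jm.
rewrite nth_pair_step; last by rewrite /= size_folded //; lia.
rewrite nth_folded // !nth_ext ?nth_eca_step ?sz_w; try lia.
by rewrite /pair_local /=; congr (eca_local _ (nth _ _ _) (nth _ _ _) (nth _ _ _),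
                         eca_local _ (nth _ _ _) (nth _ _ _) (nth _ _ _)); lia.
Qed.

End Folding.

Lemma eca_local132 a b c : eca_local 132 a b c = b && (a == c).
Proof. by case: a; case: b; case: c. Qed.

Fixpoint balanced (l : seq (bool * bool)) : bool :=
  if l is p :: l' then (if p.1 && p.2 then balanced l' else p.1 == p.2) else true.

Lemma balanced_zip s t : size s = size t ->
  balanced (zip s t) = (find negb s == find negb t).
Proof.
elim: s t => [|a s IH] [|b t] //= [sz_st].
by case: a; case: b; rewrite //= IH.
Qed.

Lemma balanced_pair_step11 l :
  balanced (pair_step 132 ((true, true) :: (true, true) :: l)) = balanced l.
Proof. by elim: l => [|[[] []] l IH] //=; rewrite /pair_local !eca_local132. Qed.

Lemma balanced_pair_step c a b l :
  (c && (a == b)) && balanced (pair_step 132 ((c, c) :: (a, b) :: l)) =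
  c && balanced ((a, b) :: l).
Proof.
case: c => //; case: a; case: b; rewrite ?balanced_pair_step11 //=.
by case: l => [|[[] []] ?].
Qed.

Lemma Pred132_balanced n w : size w = (2 * n).+1 ->
  Pred 132 n w = nth false w n && balanced (folded n w).
Proof.
elim: n w => [|n IH] w sz_w.
  by case: w sz_w => [|a []] //= _; rewrite andbT.
rewrite /Pred iterSr -/(Pred 132 n _) IH ?size_eca_step; last by lia.
rewrite nth_eca_step ?folded_eca_step ?eca_local132 //; last by lia.
have [l ->] : exists l, folded n.+1 w = (nth false w n, nth false w n.+2) :: l.
  move: (nth_folded sz_w (ltn0Sn n)) (size_folded sz_w).
  by case: (folded n.+1 w) => // p l; rewrite subSS subn0 addn1 /= => <-; exists l.
exact: balanced_pair_step.
Qed.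

Lemma Pred132_arms n w : size w = (2 * n).+1 ->
  Pred 132 n w =
  nth false w n && (find negb (left_arm n w) == find negb (right_arm n w)).
Proof.
move=> sz_w; have [szl szr] := size_arms sz_w.
by rewrite Pred132_balanced // balanced_zip // szl szr.
Qed.

Lemma left_arm_catl n x y : size x <= n ->
  left_arm n (x ++ y) = left_arm (n - size x) y ++ rev x.
Proof. by move=> le_xn; rewrite /left_arm take_cat ltnNge le_xn rev_cat. Qed.

Lemma right_arm_catl n x y : size x <= n ->
  right_arm n (x ++ y) = right_arm (n - size x) y.
Proof. by move=> le_xn; rewrite /right_arm drop_cat ltnNge leqW // subSn. Qed.

Lemma left_arm_catr n x y : n < size x -> left_arm n (x ++ y) = left_arm n x.
Proof. by move=> lt_nx; rewrite /left_arm take_cat lt_nx. Qed.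

Lemma right_arm_catr n x y : n < size x ->
  right_arm n (x ++ y) = right_arm n x ++ y.
Proof.
move=> lt_nx; rewrite /right_arm drop_cat.
case: ltnP => // le_xn; have -> : n.+1 - size x = 0 by lia.
by rewrite (drop_oversize le_xn) drop0.
Qed.

Lemma Pred132_catl n x x' y :
  size x = size x' -> size x <= n -> size x + size y = (2 * n).+1 ->
  find negb (rev x) = find negb (rev x') ->
  Pred 132 n (x ++ y) = Pred 132 n (x' ++ y).
Proof.
move=> sz_x le_xn sz_w eq_run.
rewrite !Pred132_arms ?size_cat -?sz_x // !nth_cat -sz_x ltnNge le_xn.
by rewrite !left_arm_catl ?right_arm_catl -?sz_x // !find_cat size_rev sz_x eq_run.
Qed.

Lemma Pred132_catr n x y y' :
  size y = size y' -> n < size x -> size x + size y = (2 * n).+1 ->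
  find negb y = find negb y' ->
  Pred 132 n (x ++ y) = Pred 132 n (x ++ y').
Proof.
move=> sz_y lt_nx sz_w eq_run.
rewrite !Pred132_arms ?size_cat -?sz_y // !nth_cat lt_nx.
by rewrite !left_arm_catr ?right_arm_catr // !find_cat eq_run.
Qed.

Section Protocols.

Variables X Y Z : Type.

Lemma D2_le_mono (g : X -> Y -> Z) k k' : k <= k' -> D2_le g k -> D2_le g k'.
Proof. by move=> le_k [p [dp ep]]; exists p; split=> //; apply: leq_trans le_k. Qed.

Fixpoint transpose (p : protocol X Y Z) : protocol Y X Z :=
  match p with
  | Leaf z => Leaf z
  | NodeA f l r => NodeB f (transpose l) (transpose r)
  | NodeB g l r => NodeA g (transpose l) (transpose r)
  end.

Lemma prot_eval_transpose p x y : prot_eval (transpose p) y x = prot_eval p x y.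
Proof. by elim: p => //= f l -> r ->. Qed.

Lemma prot_depth_transpose p : prot_depth (transpose p) = prot_depth p.
Proof. by elim: p => //= f l -> r ->. Qed.

Lemma D2_le_transpose (g : X -> Y -> Z) k :
  D2_le g k -> D2_le (fun y x => g x y) k.
Proof.
case=> p [dp ep]; exists (transpose p).
by split=> [|y x]; rewrite ?prot_depth_transpose ?prot_eval_transpose.
Qed.

Fixpoint bisect (s : X -> nat) (cont : nat -> protocol X Y Z) k lo :=
  if k is k'.+1 then
    NodeA (fun x => lo + 2 ^ k' <= s x) (bisect s cont k' lo)
          (bisect s cont k' (lo + 2 ^ k'))
  else cont lo.

Lemma prot_eval_bisect s cont k lo x y : lo <= s x < lo + 2 ^ k ->
  prot_eval (bisect s cont k lo) x y = prot_eval (cont (s x)) x y.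
Proof.
elim: k lo => [|k IH] lo /=; first by rewrite expn0 addn1 -eqn_leq => /eqP <-.
by rewrite expnS => bnd; case: ifP => half; apply: IH; lia.
Qed.

Lemma prot_depth_bisect s cont c k lo :
  (forall v, prot_depth (cont v) <= c) -> prot_depth (bisect s cont k lo) <= k + c.
Proof. by move=> dc; elim: k lo => [|k IH] lo //=; rewrite addSn ltnS geq_max !IH. Qed.

End Protocols.

Lemma D2_le_factor_left (X : finType) Y (g : X -> Y -> bool) (s : X -> nat) k :
  (forall x, s x < 2 ^ k) -> (forall x x' y, s x = s x' -> g x y = g x' y) ->
  D2_le g k.+1.
Proof.
move=> bnd_s g_s.
pose rep v := if [pick x | s x == v] is Some x then g x else fun=> false.
exists (bisect s (fun v => NodeB (rep v) (Leaf false) (Leaf true)) k 0); split.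
  by rewrite -addn1; apply: prot_depth_bisect.
move=> x y; rewrite prot_eval_bisect /=; last by rewrite bnd_s.
rewrite /rep; case: pickP => [x' /eqP /g_s -> | /(_ x)]; last by rewrite eqxx.
by case: (g x y).
Qed.

Lemma D2_le_factor_right X (Y : finType) (g : X -> Y -> bool) (s : Y -> nat) k :
  (forall y, s y < 2 ^ k) -> (forall x y y', s y = s y' -> g x y = g x y') ->
  D2_le g k.+1.
Proof.
move=> bnd_s g_s; apply: (D2_le_transpose (g := fun y x => g x y)).
by apply: (D2_le_factor_left bnd_s) => y y' x /g_s.
Qed.

Theorem mainTheorem17 :
  exists (C n0 : nat), forall n : nat, n0 <= n ->
    Dword_le (2 * n + 1) (Pred 132 n) (C * trunc_log 2 n).
Proof.
exists 3, 2 => n le2n i lt_i.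
have lt_n_pow : n < 2 ^ (trunc_log 2 n).+1 by apply: trunc_log_ltn.
have log_gt0 : 0 < trunc_log 2 n by apply: trunc_log_max.
apply: (@D2_le_mono _ _ _ _ (trunc_log 2 n).+2); first by lia.
have [le_in | lt_ni] := leqP i n.
- apply: (@D2_le_factor_left _ _ _ (fun x : i.-tuple bool => find negb (rev x))).
    move=> x; apply: leq_ltn_trans (find_size _ _) _.
    by rewrite size_rev size_tuple; lia.
  by move=> x x' y; apply: Pred132_catl; rewrite ?size_tuple //; lia.
- apply: (@D2_le_factor_right _ _ _ (fun y : (2 * n + 1 - i).-tuple bool => find negb y)).
    by move=> y; apply: leq_ltn_trans (find_size _ _) _; rewrite size_tuple; lia.
  by move=> x y y'; apply: Pred132_catr; rewrite ?size_tuple //; lia.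
Qed.
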